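(* Let $f(x)=-\ln\Big(\sum_{i=1}^nw_ie^{-\|x-\mu_i\|^2/2}\Big)$ on $\mathbb{R}^d$, where $w_i>0$, $\sum_iw_i=1$, and $\|\mu_i\|\le D$ for all $i$. Then there exists a $\frac12$-strongly convex function $g:\mathbb{R}^d\to\mathbb{R}$ with $\sup_x|f(x)-g(x)|\le D^2$.
   Context: A function $h:\mathbb{R}^d\to\mathbb{R}$ is $\alpha$-strongly convex if for all $x,y$ and $t\in[0,1]$, $h(tx+(1-t)y)\le th(x)+(1-t)h(y)-\frac12\alpha t(1-t)\|x-y\|_2^2$. *)

From Stdlib Require Import Reals.
Open Scope R_scope.

(* Vectors of R^d are represented as functions nat -> R that vanish at
   indices >= d (coordinates 0..d-1). *)
Definition in_Rd (d : nat) (x : nat -> R) : Prop := forall j, (d <= j)%nat -> x j = 0.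

Fixpoint sumR (n : nat) (f : nat -> R) : R :=
  match n with
  | O => 0
  | S m => sumR m f + f m
  end.

Definition sqnorm (d : nat) (x : nat -> R) : R := sumR d (fun j => (x j) ^ 2).
Definition norm (d : nat) (x : nat -> R) : R := sqrt (sqnorm d x).

Definition vsub (x y : nat -> R) : nat -> R := fun j => x j - y j.
Definition vcomb (t : R) (x y : nat -> R) : nat -> R := fun j => t * x j + (1 - t) * y j.

Definition strongly_convex (d : nat) (alpha : R) (h : (nat -> R) -> R) : Prop :=
  forall x y t, in_Rd d x -> in_Rd d y -> 0 <= t <= 1 ->
    h (vcomb t x y) <= t * h x + (1 - t) * h y
                        - / 2 * alpha * t * (1 - t) * (norm d (vsub x y)) ^ 2.

Definition mixture_potential (d n : nat) (w : nat -> R) (mu : nat -> nat -> R)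
  (x : nat -> R) : R :=
  - ln (sumR n (fun i => w i * exp (- (norm d (vsub x (mu i))) ^ 2 / 2))).

(** Complete the square against an auxiliary centre [c]: since
    [|x - c|^2 <= 2 |x - mu|^2 + 2 |mu - c|^2], every summand of the mixture obeys
    [exp (-|x - mu_i|^2 / 2) <= exp (-|x - c|^2 / 4) exp (|mu_i - c|^2 / 2)], so the
    quadratic [phi_c x = |x - c|^2 / 4 - ln (sum_i w_i exp (|mu_i - c|^2 / 2))] lies
    below [f].  Each [phi_c] is [1/2]-strongly convex, hence so is [g = sup_c phi_c],
    and [g <= f].  Choosing [c = -x] the parallelogram law gives
    [|mu_i + x|^2 / 2 - |x|^2 = |mu_i|^2 - |x - mu_i|^2 / 2 <= D^2 - |x - mu_i|^2 / 2],
    i.e. [phi_(-x) x >= f x - D^2]. *)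

From Stdlib Require Import Reals Lra Lia.
Open Scope R_scope.

Lemma ln_le x y : 0 < x -> x <= y -> ln x <= ln y.
Proof. intros Hx [Hlt | ->]; [left; apply ln_increasing |]; lra. Qed.

Lemma exp_le x y : x <= y -> exp x <= exp y.
Proof. intros [Hlt | ->]; [left; apply exp_increasing |]; lra. Qed.

Lemma sumR_ext n f g : (forall i, (i < n)%nat -> f i = g i) -> sumR n f = sumR n g.
Proof.
  induction n as [| n IH]; simpl; intros Hfg; [reflexivity |].
  rewrite IH, Hfg; auto.
Qed.

Lemma sumR_le n f g : (forall i, (i < n)%nat -> f i <= g i) -> sumR n f <= sumR n g.
Proof.
  induction n as [| n IH]; simpl; intros Hfg; [lra |].
  assert (sumR n f <= sumR n g) by (apply IH; auto).
  assert (f n <= g n) by (apply Hfg; lia).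
  lra.
Qed.

Lemma sumR_const0 n : sumR n (fun _ => 0) = 0.
Proof. induction n as [| n IH]; simpl; [| rewrite IH]; ring. Qed.

Lemma sumR_ge0 n f : (forall i, (i < n)%nat -> 0 <= f i) -> 0 <= sumR n f.
Proof. intros Hf. rewrite <- (sumR_const0 n). apply sumR_le; exact Hf. Qed.

Lemma sumR_gt0 n f : (0 < n)%nat -> (forall i, (i < n)%nat -> 0 < f i) -> 0 < sumR n f.
Proof.
  destruct n as [| n]; [lia |]. intros _ Hf; simpl.
  assert (0 <= sumR n f) by (apply sumR_ge0; intros; left; apply Hf; lia).
  assert (0 < f n) by (apply Hf; lia).
  lra.
Qed.

Lemma sumR_scal n k f : sumR n (fun i => k * f i) = k * sumR n f.
Proof. induction n as [| n IH]; simpl; [| rewrite IH]; ring. Qed.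

Lemma sumR_lincomb3 n a b c f g h :
  sumR n (fun i => a * f i + b * g i + c * h i) = a * sumR n f + b * sumR n g + c * sumR n h.
Proof. induction n as [| n IH]; simpl; [| rewrite IH]; ring. Qed.

Lemma sumR_gt0_wexp n w a :
  (0 < n)%nat -> (forall i, (i < n)%nat -> 0 < w i) ->
  0 < sumR n (fun i => w i * exp (a i)).
Proof.
  intros Hn Hw. apply sumR_gt0; [exact Hn |].
  intros i Hi. apply Rmult_lt_0_compat; [apply Hw; exact Hi | apply exp_pos].
Qed.

Lemma ln_sumR_wexp_le n w a b k :
  (0 < n)%nat -> (forall i, (i < n)%nat -> 0 < w i) ->
  (forall i, (i < n)%nat -> a i <= b i + k) ->
  ln (sumR n (fun i => w i * exp (a i))) <= ln (sumR n (fun i => w i * exp (b i))) + k.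
Proof.
  intros Hn Hw Hab.
  rewrite <- (ln_exp k).
  rewrite <- ln_mult; [| apply sumR_gt0_wexp; auto | apply exp_pos].
  apply ln_le; [apply sumR_gt0_wexp; auto |].
  rewrite Rmult_comm, <- sumR_scal. apply sumR_le. intros i Hi.
  replace (exp k * (w i * exp (b i))) with (w i * exp (b i + k)) by (rewrite exp_plus; ring).
  apply Rmult_le_compat_l; [left; apply Hw; exact Hi |].
  apply exp_le, Hab; exact Hi.
Qed.

Lemma sqnorm_ge0 d v : 0 <= sqnorm d v.
Proof. apply sumR_ge0. intros; apply pow2_ge_0. Qed.

Lemma norm_sqr d v : norm d v ^ 2 = sqnorm d v.
Proof. apply pow2_sqrt, sqnorm_ge0. Qed.

Lemma sqnorm_le_sqr d v D : norm d v <= D -> sqnorm d v <= D ^ 2.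
Proof.
  intros Hv. rewrite <- norm_sqr. apply pow_incr. split; [apply sqrt_pos | exact Hv].
Qed.

Lemma sqnorm_vsub_vcomb d t x y c :
  sqnorm d (vsub (vcomb t x y) c) =
  t * sqnorm d (vsub x c) + (1 - t) * sqnorm d (vsub y c) - t * (1 - t) * sqnorm d (vsub x y).
Proof.
  transitivity (t * sqnorm d (vsub x c) + (1 - t) * sqnorm d (vsub y c)
                + - (t * (1 - t)) * sqnorm d (vsub x y)); [| ring].
  unfold sqnorm. rewrite <- sumR_lincomb3.
  apply sumR_ext; intros; unfold vsub, vcomb; ring.
Qed.

Lemma sqnorm_vsub_le d x y z :
  sqnorm d (vsub x z) <= 2 * sqnorm d (vsub x y) + 2 * sqnorm d (vsub y z).
Proof.
  assert (Hdiff : 0 <= 2 * sqnorm d (vsub x y) + 2 * sqnorm d (vsub y z) + (-1) * sqnorm d (vsub x z)).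
  { unfold sqnorm. rewrite <- sumR_lincomb3. apply sumR_ge0. intros j _.
    unfold vsub. replace (2 * (x j - y j) ^ 2 + 2 * (y j - z j) ^ 2 + -1 * (x j - z j) ^ 2)
      with ((x j - 2 * y j + z j) ^ 2) by ring.
    apply pow2_ge_0. }
  lra.
Qed.

Lemma sqnorm_parallelogram d x y :
  sqnorm d (vsub x (fun j => - y j)) + sqnorm d (vsub x y) = 2 * sqnorm d x + 2 * sqnorm d y.
Proof.
  replace (sqnorm d (vsub x (fun j => - y j)) + sqnorm d (vsub x y))
    with (1 * sqnorm d (vsub x (fun j => - y j)) + 1 * sqnorm d (vsub x y) + 0 * sqnorm d x) by ring.
  replace (2 * sqnorm d x + 2 * sqnorm d y)
    with (2 * sqnorm d x + 2 * sqnorm d y + 0 * sqnorm d x) by ring.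
  unfold sqnorm. rewrite <- !sumR_lincomb3.
  apply sumR_ext; intros; unfold vsub; ring.
Qed.

Lemma sqnorm_vsub_opp d x : sqnorm d (vsub x (fun j => - x j)) = 4 * sqnorm d x.
Proof.
  unfold sqnorm. rewrite <- sumR_scal. apply sumR_ext; intros; unfold vsub; ring.
Qed.

Lemma sqnorm_vsubC d x y : sqnorm d (vsub x y) = sqnorm d (vsub y x).
Proof. apply sumR_ext; intros; unfold vsub; ring. Qed.

Lemma strongly_convex_quadratic d alpha c k :
  strongly_convex d alpha (fun x => alpha / 2 * sqnorm d (vsub x c) + k).
Proof.
  intros x y t _ _ _. rewrite sqnorm_vsub_vcomb, norm_sqr. unfold Rdiv. lra.
Qed.

Lemma strongly_convex_sup (I : Type) (i0 : I) d alpha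
    (phi : I -> (nat -> R) -> R) (ub : (nat -> R) -> R) :
  (forall i, strongly_convex d alpha (phi i)) ->
  (forall i x, phi i x <= ub x) ->
  exists g, strongly_convex d alpha g /\
    (forall i x, phi i x <= g x) /\ (forall x, g x <= ub x).
Proof.
  intros Hconv Hub.
  assert (Hlub : forall x, { s | is_lub (fun r => exists i, r = phi i x) s }).
  { intros x. apply completeness.
    - exists (ub x). intros r [i ->]. apply Hub.
    - exists (phi i0 x). exists i0. reflexivity. }
  exists (fun x => proj1_sig (Hlub x)).
  assert (Hge : forall i x, phi i x <= proj1_sig (Hlub x)).
  { intros i x. apply (proj2_sig (Hlub x)). exists i. reflexivity. }
  assert (Hle : forall x r, (forall i, phi i x <= r) -> proj1_sig (Hlub x) <= r).
  { intros x r Hr. apply (proj2_sig (Hlub x)). intros q [i ->]. apply Hr. }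
  split; [| split; [exact Hge | intros x; apply Hle; intros i; apply Hub]].
  intros x y t Hx Hy Ht. apply Hle. intros i.
  eapply Rle_trans; [apply Hconv; assumption |].
  pose proof (Hge i x). pose proof (Hge i y).
  assert (t * phi i x <= t * proj1_sig (Hlub x)) by (apply Rmult_le_compat_l; lra).
  assert ((1 - t) * phi i y <= (1 - t) * proj1_sig (Hlub y)) by (apply Rmult_le_compat_l; lra).
  lra.
Qed.

Section Mixture.

Variables (d n : nat) (w : nat -> R) (mu : nat -> nat -> R).
Hypothesis n_gt0 : (0 < n)%nat.
Hypothesis w_gt0 : forall i, (i < n)%nat -> 0 < w i.

Let f := mixture_potential d n w mu.

Definition mixture_minorant (c x : nat -> R) : R :=
  / 2 / 2 * sqnorm d (vsub x c) - ln (sumR n (fun i => w i * exp (sqnorm d (vsub (mu i) c) / 2))).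

Lemma mixture_minorant_strongly_convex c : strongly_convex d (/ 2) (mixture_minorant c).
Proof.
  intros x y t Hx Hy Ht.
  pose proof (strongly_convex_quadratic d (/ 2) c
    (- ln (sumR n (fun i => w i * exp (sqnorm d (vsub (mu i) c) / 2)))) x y t Hx Hy Ht).
  unfold mixture_minorant. lra.
Qed.

Lemma mixture_potentialE x :
  f x = - ln (sumR n (fun i => w i * exp (- sqnorm d (vsub x (mu i)) / 2))).
Proof.
  unfold f, mixture_potential. do 2 f_equal.
  apply sumR_ext; intros; rewrite norm_sqr; reflexivity.
Qed.

Lemma mixture_minorant_le c x : mixture_minorant c x <= f x.
Proof.
  rewrite mixture_potentialE. unfold mixture_minorant.
  enough (ln (sumR n (fun i => w i * exp (- sqnorm d (vsub x (mu i)) / 2)))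
          <= ln (sumR n (fun i => w i * exp (sqnorm d (vsub (mu i) c) / 2)))
             + - (/ 2 / 2 * sqnorm d (vsub x c))) by lra.
  apply ln_sumR_wexp_le; auto. intros i _.
  pose proof (sqnorm_vsub_le d x (mu i) c). lra.
Qed.

Lemma mixture_minorant_opp_ge D x :
  (forall i, (i < n)%nat -> norm d (mu i) <= D) ->
  f x - D ^ 2 <= mixture_minorant (fun j => - x j) x.
Proof.
  intros Hmu. rewrite mixture_potentialE. unfold mixture_minorant.
  rewrite sqnorm_vsub_opp.
  enough (ln (sumR n (fun i => w i * exp (sqnorm d (vsub (mu i) (fun j => - x j)) / 2)))
          <= ln (sumR n (fun i => w i * exp (- sqnorm d (vsub x (mu i)) / 2)))
             + (D ^ 2 + sqnorm d x)) by lra.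
  apply ln_sumR_wexp_le; auto. intros i Hi.
  pose proof (sqnorm_parallelogram d (mu i) x).
  pose proof (sqnorm_le_sqr d (mu i) D (Hmu i Hi)).
  rewrite (sqnorm_vsubC d x).
  lra.
Qed.

End Mixture.

Theorem mainTheorem10 (d n : nat) (w : nat -> R) (mu : nat -> nat -> R) (D : R)
  (Hw_pos : forall i, (i < n)%nat -> 0 < w i)
  (Hw_sum : sumR n w = 1)
  (Hmu_dim : forall i, (i < n)%nat -> in_Rd d (mu i))
  (Hmu_bd : forall i, (i < n)%nat -> norm d (mu i) <= D) :
  exists g : (nat -> R) -> R,
    strongly_convex d (/ 2) g /\
    (forall x, in_Rd d x -> Rabs (mixture_potential d n w mu x - g x) <= D ^ 2).
Proof.
  (* The normalisation of [w] only serves to exclude the empty mixture. *)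
  assert (Hn : (0 < n)%nat) by (destruct n; [simpl in Hw_sum; lra | lia]).
  destruct (strongly_convex_sup _ (fun _ => 0) d (/ 2) (mixture_minorant d n w mu)
              (mixture_potential d n w mu)) as [g [Hg_conv [Hg_ge Hg_le]]].
  - apply mixture_minorant_strongly_convex.
  - intros c x. apply mixture_minorant_le; assumption.
  - exists g. split; [exact Hg_conv |]. intros x _.
    pose proof (Hg_le x). pose proof (Hg_ge (fun j => - x j) x).
    pose proof (mixture_minorant_opp_ge d n w mu Hn Hw_pos D x Hmu_bd).
    rewrite Rabs_right; lra.
Qed.
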